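(* Let $I$ be a commutative monoid with identity $1$, and let $\mathrm{Inv}=\mathrm{Map}^l_I\circ\mathrm{Map}^r_I$ as an endofunctor on $\mathrm{bACT}(I)$. For an object $M$ let $\mathrm{ev}_M:\mathrm{Inv}(M)\to M$, $\mathrm{ev}_M(f)=f(1)(1)$. Then the maps $\mathrm{ev}_{\mathrm{Inv}(M)}:\mathrm{Inv}(\mathrm{Inv}(M))\to\mathrm{Inv}(M)$ are bijective $I$-equivariant maps with $I$-equivariant inverses and define a natural isomorphism $\mathrm{Inv}\circ\mathrm{Inv}\Rightarrow\mathrm{Inv}$.
   Context: Let $I$ be a monoid with operation $\otimes$. For a set $X$, $\mathrm{End}_l(X)$ denotes self-maps written on the left with product $f\circ g$ ($g$ first); $\mathrm{End}_r(X)$ denotes self-maps written on the right, $x\mapsto(x)f$, with $(x)(fg)=((x)f)g$. An $I$-set is a set $X$ with a pair $\xi=(\xi_l,\xi_r)$ of monoid homomorphisms $\xi_l:I\to\mathrm{End}_l(X)$, $\xi_r:I\to\mathrm{End}_r(X)$ with $(\xi_l(i)(x))\xi_r(j)=\xi_l(i)((x)\xi_r(j))$; $f:(X,\xi)\to(Y,\eta)$ is $I$-equivariant if $(f(\xi_l(i)(x)))\eta_r(i)=\eta_l(i)(f((x)\xi_r(i)))$ for all $i,x$. An $I$-set is invertible on one side if either $\xi_l(i)$ is bijective for all $i$ or $\xi_r(i)$ is bijective for all $i$; $\mathrm{bACT}(I)$ is the category of $I$-sets that are products (componentwise action) of $I$-sets invertible on one side, with $I$-equivariant maps. For an $I$-set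 $(A,\alpha)$: $\mathrm{Map}^l_I(A)$ is the set of $f:I\to A$ with $(f(j))\alpha_r(i)=\alpha_l(i)(f(j\otimes i))$ for all $i,j$, with action $\theta_l(k)=\mathrm{id}$, $((f)\theta_r(k))(j)=f(k\otimes j)$; $\mathrm{Map}^r_I(A)$ is the set of $f:I\to A$ with $(f(i\otimes j))\alpha_r(i)=\alpha_l(i)(f(j))$ for all $i,j$, with action $(\vartheta_l(k)(f))(i)=f(i\otimes k)$, $\vartheta_r(k)=\mathrm{id}$. Both are functors via $u\mapsto(h\mapsto u\circ h)$. *)

From Stdlib Require Import FunctionalExtensionality ProofIrrelevance.
From mathcomp Require Import ssreflect ssrfun ssrbool.
Set Implicit Arguments.
Unset Strict Implicit.
Unset Printing Implicit Defensive.

Record monoid := Monoid {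
  mcar :> Type;
  mmul : mcar -> mcar -> mcar;
  mone : mcar;
  mmulA : forall a b c, mmul a (mmul b c) = mmul (mmul a b) c;
  mmul1l : forall a, mmul mone a = a;
  mmul1r : forall a, mmul a mone = a }.

Lemma sig_ext (A : Type) (P : A -> Prop) (x y : sig P) :
  proj1_sig x = proj1_sig y -> x = y.
Proof.
case: x => x px; case: y => y py /= exy; subst y.
by rewrite (proof_irrelevance _ px py).
Qed.

Section ISets.
Variable I : monoid.
Local Notation mul := (@mmul I).
Local Notation one := (@mone I).

(* An I-set: actl i = xi_l(i) (maps written on the left),
   actr i x = (x)xi_r(i) (maps written on the right). *)
Record ISet := {
  car : Type;
  actl : mcar I -> car -> car;
  actr : mcar I -> car -> car;
  actl1 : forall x, actl one x = x;
  actlM : forall (i j : mcar I) x, actl (mul i j) x = actl i (actl j x);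
  actr1 : forall x, actr one x = x;
  actrM : forall (i j : mcar I) x, actr (mul i j) x = actr j (actr i x);
  actlr : forall (i j : mcar I) x, actr j (actl i x) = actl i (actr j x) }.
Arguments actl : clear implicits.
Arguments actr : clear implicits.
Arguments car : clear implicits.

Definition equivariant (X Y : ISet) (f : car X -> car Y) : Prop :=
  forall i x, actr Y i (f (actl X i x)) = actl Y i (f (actr X i x)).

Definition inv_one_side (X : ISet) : Prop :=
  (forall i, bijective (actl X i)) \/ (forall i, bijective (actr X i)).

(* X is (isomorphic, as an I-set, to) a product with componentwise action of
   I-sets invertible on one side. *)
Definition in_bACT (M : ISet) : Prop :=
  exists (K : Type) (X : K -> ISet), (forall k, inv_one_side (X k)) /\
  exists phi : car M -> forall k, car (X k),
    bijective phi /\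
    (forall i x k, phi (actl M i x) k = actl (X k) i (phi x k)) /\
    (forall i x k, phi (actr M i x) k = actr (X k) i (phi x k)).

Definition mapr_prop (A : ISet) (f : mcar I -> car A) : Prop :=
  forall i j, actr A i (f (mul i j)) = actl A i (f j).
Definition MapR_car (A : ISet) := {f : mcar I -> car A | mapr_prop f}.

Lemma mapr_shift_prop (A : ISet) (k : mcar I) (f : mcar I -> car A) :
  mapr_prop f -> mapr_prop (fun i => f (mul i k)).
Proof. by move=> H i j /=; rewrite -(@mmulA I); apply: H. Qed.

Definition mapr_l (A : ISet) (k : mcar I) (f : MapR_car A) : MapR_car A :=
  exist _ (fun i => proj1_sig f (mul i k)) (mapr_shift_prop k (proj2_sig f)).
Definition mapr_r (A : ISet) (k : mcar I) (f : MapR_car A) : MapR_car A := f.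

Lemma mapr_l1 A (f : MapR_car A) : mapr_l one f = f.
Proof. apply: sig_ext; apply: functional_extensionality => i; by rewrite /mapr_l /= (@mmul1r I). Qed.
Lemma mapr_lM A i j (f : MapR_car A) : mapr_l (mul i j) f = mapr_l i (mapr_l j f).
Proof. apply: sig_ext; apply: functional_extensionality => x; by rewrite /mapr_l /= (@mmulA I). Qed.

Definition MapR (A : ISet) : ISet :=
  @Build_ISet (MapR_car A) (@mapr_l A) (@mapr_r A) (@mapr_l1 A) (@mapr_lM A)
    (fun _ => erefl) (fun _ _ _ => erefl) (fun _ _ _ => erefl).

Definition mapl_prop (B : ISet) (F : mcar I -> car B) : Prop :=
  forall i j, actr B i (F j) = actl B i (F (mul j i)).
Definition MapL_car (B : ISet) := {F : mcar I -> car B | mapl_prop F}.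

Lemma mapl_shift_prop (B : ISet) (k : mcar I) (F : mcar I -> car B) :
  mapl_prop F -> mapl_prop (fun j => F (mul k j)).
Proof. by move=> H i j /=; rewrite (@mmulA I); apply: H. Qed.

Definition mapl_l (B : ISet) (k : mcar I) (F : MapL_car B) : MapL_car B := F.
Definition mapl_r (B : ISet) (k : mcar I) (F : MapL_car B) : MapL_car B :=
  exist _ (fun j => proj1_sig F (mul k j)) (mapl_shift_prop k (proj2_sig F)).

Lemma mapl_r1 B (F : MapL_car B) : mapl_r one F = F.
Proof. apply: sig_ext; apply: functional_extensionality => i; by rewrite /mapl_r /= (@mmul1l I). Qed.
Lemma mapl_rM B i j (F : MapL_car B) : mapl_r (mul i j) F = mapl_r j (mapl_r i F).
Proof. apply: sig_ext; apply: functional_extensionality => x; by rewrite /mapl_r /= (@mmulA I). Qed.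

Definition MapL (B : ISet) : ISet :=
  @Build_ISet (MapL_car B) (@mapl_l B) (@mapl_r B)
    (fun _ => erefl) (fun _ _ _ => erefl) (@mapl_r1 B) (@mapl_rM B)
    (fun _ _ _ => erefl).

Definition Inv (A : ISet) : ISet := MapL (MapR A).

Definition ev (A : ISet) (F : car (Inv A)) : car A :=
  proj1_sig (proj1_sig F one) one.

Definition raw2 (A : ISet) (F : car (Inv A)) (a b : mcar I) : car A :=
  proj1_sig (proj1_sig F a) b.
Definition raw4 (A : ISet) (F : car (Inv (Inv A))) (a b c d : mcar I) : car A :=
  raw2 (raw2 F a b) c d.

End ISets.

(* An element F of Inv(A) is a function of two variables, invariant under
   (p, q) |-> (pi, qi); an element G of Inv(Inv A) is a function of four
   variables, invariant under (a, b) |-> (ai, bi), under (b, c) |-> (ib, ic)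
   and, for fixed (a, b), under (c, d) |-> (ci, di).  For commutative I these
   invariances collapse G onto G(1, 1, ac, bd), so ev, which reads off
   G(1, 1, -, -), is inverted by F |-> ((a, b, c, d) |-> F(ac, bd)). *)

From mathcomp Require Import ssreflect ssrfun ssrbool.
From Stdlib Require Import FunctionalExtensionality.
Set Implicit Arguments.
Unset Strict Implicit.

Section InvCoordinates.
Variable I : monoid.
Local Notation "a * b" := (@mmul I a b).
Local Notation "1" := (mone I).

Lemma inv_ext (A : ISet I) (F G : car (Inv A)) :
  (forall c d, raw2 F c d = raw2 G c d) -> F = G.
Proof.
move=> eqFG; apply: sig_ext; apply: functional_extensionality => c.
by apply: sig_ext; apply: functional_extensionality => d; apply: eqFG.
Qed.

Lemma inv2_ext (A : ISet I) (F G : car (Inv (Inv A))) :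
  (forall a b c d, raw4 F a b c d = raw4 G a b c d) -> F = G.
Proof.
move=> eqFG; apply: sig_ext; apply: functional_extensionality => a.
apply: sig_ext; apply: functional_extensionality => b.
by apply: inv_ext => c d; apply: eqFG.
Qed.

Lemma raw2_shift (A : ISet I) (F : car (Inv A)) p q i :
  raw2 F p q = raw2 F (p * i) (q * i).
Proof.
have shiftF : proj1_sig F p = mapr_l i (proj1_sig F (p * i)) := proj2_sig F i p.
by rewrite /raw2 shiftF.
Qed.

Lemma raw2_mapr (A : ISet I) (F : car (Inv A)) p : mapr_prop (raw2 F p).
Proof. exact: proj2_sig (proj1_sig F p). Qed.

Lemma raw4_shift_out (A : ISet I) (G : car (Inv (Inv A))) a b c d i :
  raw4 G a b c d = raw4 G (a * i) (b * i) c d.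
Proof.
have shiftG : proj1_sig G a = mapr_l i (proj1_sig G (a * i)) := proj2_sig G i a.
by rewrite /raw4 /raw2 shiftG.
Qed.

Lemma raw4_shift_mid (A : ISet I) (G : car (Inv (Inv A))) a b c d i :
  raw4 G a (i * b) (i * c) d = raw4 G a b c d.
Proof.
have shiftG : mapl_r i (proj1_sig (proj1_sig G a) (i * b)) = proj1_sig (proj1_sig G a) b
  := proj2_sig (proj1_sig G a) i b.
by rewrite /raw4 /raw2 -shiftG.
Qed.

Lemma raw2_ev (A : ISet I) (G : car (Inv (Inv A))) c d :
  raw2 (ev G) c d = raw4 G 1 1 c d.
Proof. by []. Qed.

Section MkInv.
Variables (A : ISet I) (f : I -> I -> car A).
Hypothesis f_shift : forall p q i, f p q = f (p * i) (q * i).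
Hypothesis f_mapr : forall p, mapr_prop (f p).

Definition inv_row (p : I) : MapR_car A := exist _ (f p) (f_mapr p).

Lemma inv_row_mapl : mapl_prop (B := MapR A) inv_row.
Proof.
move=> i p; apply: sig_ext; apply: functional_extensionality => q.
exact: f_shift.
Qed.

Definition mkInv : car (Inv A) := exist _ inv_row inv_row_mapl.

Lemma raw2_mkInv p q : raw2 mkInv p q = f p q.
Proof. by []. Qed.

End MkInv.

Lemma ev_equivariant (A : ISet I) : equivariant (@ev I (Inv A)).
Proof.
move=> i G; apply: inv_ext => c d.
change (raw4 G 1 1 (i * c) d = raw4 G (i * 1) 1 c d).
rewrite (raw4_shift_out G 1 1 _ _ i) !(@mmul1l I) (@mmul1r I).
by rewrite -(raw4_shift_mid G i 1 c d i) (@mmul1r I).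
Qed.

End InvCoordinates.

Section Coev.
Variable I : monoid.
Hypothesis mulC : forall a b : I, mmul a b = mmul b a.
Local Notation "a * b" := (@mmul I a b).
Local Notation "1" := (mone I).

Lemma mulCA (a b c : I) : a * (b * c) = b * (a * c).
Proof. by rewrite !(@mmulA I) (mulC a b). Qed.

Lemma mulAC (a b c : I) : a * b * c = a * c * b.
Proof. by rewrite -!(@mmulA I) (mulC b c). Qed.

Lemma raw4_ev (A : ISet I) (G : car (Inv (Inv A))) a b c d :
  raw4 G a b c d = raw2 (ev G) (a * c) (b * d).
Proof.
rewrite {1}/raw4 (raw2_shift _ c d b) (mulC c b) (mulC d b) -/(raw4 _ _ _ _ _).
rewrite -[X in raw4 G a X](@mmul1r I b) raw4_shift_mid.
rewrite -(raw4_shift_mid G a 1 c (b * d) a) (@mmul1r I).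
by rewrite raw2_ev (raw4_shift_out G 1 1 _ _ a) !(@mmul1l I).
Qed.

Variable A : ISet I.

Section CoevDef.
Variable F : car (Inv A).

Lemma coev_entry_shift a b c d i :
  raw2 F (a * c) (b * d) = raw2 F (a * (c * i)) (b * (d * i)).
Proof. by rewrite !(@mmulA I) -raw2_shift. Qed.

Lemma coev_entry_mapr a b c : mapr_prop (fun d => raw2 F (a * c) (b * d)).
Proof. by move=> i j /=; rewrite mulCA raw2_mapr. Qed.

Definition coev_row (a b : I) : car (Inv A) :=
  mkInv (@coev_entry_shift a b) (@coev_entry_mapr a b).

Lemma coev_row_shift a b i : coev_row a b = coev_row (a * i) (b * i).
Proof.
apply: inv_ext => c d; rewrite !raw2_mkInv (raw2_shift F _ _ i).
by rewrite mulAC (mulAC b).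
Qed.

Lemma coev_row_mapr a : mapr_prop (A := Inv A) (coev_row a).
Proof.
move=> i j; apply: inv_ext => c d.
change (raw2 F (a * (i * c)) (i * j * d) = raw2 F (a * c) (j * d)).
by rewrite (raw2_shift F (a * c) _ i) (mulC i c) (mulC (j * d) i) !(@mmulA I).
Qed.

Definition coev : car (Inv (Inv A)) := mkInv coev_row_shift coev_row_mapr.

Lemma raw4_coev a b c d : raw4 coev a b c d = raw2 F (a * c) (b * d).
Proof. by []. Qed.

End CoevDef.

Lemma ev_coev : cancel coev (@ev I (Inv A)).
Proof. by move=> F; apply: inv_ext => c d; rewrite /ev /raw2 /= !(@mmul1l I). Qed.

Lemma coev_ev : cancel (@ev I (Inv A)) coev.
Proof. by move=> G; apply: inv2_ext => a b c d; rewrite raw4_coev raw4_ev. Qed.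

Lemma coev_equivariant : equivariant coev.
Proof.
move=> i F; apply: inv2_ext => a b c d.
by rewrite /raw4 /raw2 /= -(@mmulA I).
Qed.

End Coev.

Theorem mainTheorem10 (I : monoid)
  (Icomm : forall a b : I, mmul a b = mmul b a)
  (M : ISet I) (HM : in_bACT M) :
  (* ev_{Inv M} : Inv(Inv M) -> Inv M is I-equivariant *)
  equivariant (@ev I (Inv M)) /\
  (* it is bijective with an I-equivariant inverse *)
  (exists g : car (Inv M) -> car (Inv (Inv M)),
      cancel (@ev I (Inv M)) g /\ cancel g (@ev I (Inv M)) /\ equivariant g) /\
  (* naturality: for u : M -> N in bACT(I), ev_{Inv N} o Inv(Inv u) = Inv u o ev_{Inv M} *)
  (forall (N : ISet I) (u : car M -> car N), in_bACT N -> equivariant u ->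
     forall (F : car (Inv (Inv M))) (G : car (Inv (Inv N))),
       (forall a b c d, raw4 G a b c d = u (raw4 F a b c d)) ->
       forall a b, raw2 (ev G) a b = u (raw2 (ev F) a b)).
Proof.
split; first exact: ev_equivariant.
split.
- exists (@coev I Icomm M).
  by split; [exact: coev_ev | split; [exact: ev_coev | exact: coev_equivariant]].
- by move=> N u _ _ F G uFG a b; apply: uFG.
Qed.
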